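(* Let $p\ge 1$, $\alpha\in[0,1]$, $0<\varepsilon\le 1$ and $g\in\mathbb{R}^p$ with $g\neq 0$. Let $m$ be an index with $|g_m|=\max_d|g_d|$, let $I_{12}$ be the $p\times p$ diagonal matrix with $(I_{12})_{dd}=1$ if $|g_d|\ge \alpha|g_m|$ and $0$ otherwise, and let $p_1:=\sum_d (I_{12})_{dd}$ (so $1\le p_1\le p$). Define $$\Delta x_{12,\varepsilon}:=-I_{12}g\left(\frac{\alpha\varepsilon}{\|I_{12}g\|_1}+\frac{(1-\alpha)\sqrt{\varepsilon}}{\|I_{12}g\|_2}\right)$$ and $h_\alpha(v):=\alpha\|v\|_1+(1-\alpha)\|v\|_2^2$. Then $$0.61\,\varepsilon<\varepsilon\left(1-\alpha(1-\alpha)(2-\alpha)\left(1-\frac{\varepsilon}{p_1}\right)\right)\le h_\alpha(\Delta x_{12,\varepsilon})\le \varepsilon\left(1+\alpha(1-\alpha)\left(\sqrt{\frac{p_1}{\varepsilon}}-1\right)\right)\le \varepsilon\left(1+\frac{\sqrt{p_1/\varepsilon}-1}{4}\right).$$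
   Context: $\Delta x_{12,\varepsilon}$ is the elastic gradient descent update direction in the general stagewise framework with step size $\varepsilon$. *)

From mathcomp Require Import all_boot all_order all_algebra.
From mathcomp Require Import reals.
Set Implicit Arguments. Unset Strict Implicit. Unset Printing Implicit Defensive.
Import Order.TTheory GRing.Theory Num.Theory.
Local Open Scope ring_scope.

Definition norm1 (R : realType) (p : nat) (v : 'I_p -> R) : R :=
  \sum_(d < p) `|v d|.
Definition norm2 (R : realType) (p : nat) (v : 'I_p -> R) : R :=
  Num.sqrt (\sum_(d < p) v d ^+ 2).

(* indicator of the diagonal entries of I_12 : |g_d| >= alpha |g_m| *)
Definition I12 (R : realType) (p : nat) (alpha : R) (g : 'I_p -> R) (m : 'I_p)
  (d : 'I_p) : R := if alpha * `|g m| <= `|g d| then 1 else 0.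

Definition I12g (R : realType) (p : nat) (alpha : R) (g : 'I_p -> R) (m : 'I_p)
  : 'I_p -> R := fun d => I12 alpha g m d * g d.

Definition p1 (R : realType) (p : nat) (alpha : R) (g : 'I_p -> R) (m : 'I_p) : R :=
  \sum_(d < p) I12 alpha g m d.

Definition dx12 (R : realType) (p : nat) (alpha eps : R) (g : 'I_p -> R) (m : 'I_p)
  : 'I_p -> R :=
  fun d => - I12g alpha g m d *
    (alpha * eps / norm1 (I12g alpha g m)
     + (1 - alpha) * Num.sqrt eps / norm2 (I12g alpha g m)).

Definition h_alpha (R : realType) (p : nat) (alpha : R) (v : 'I_p -> R) : R :=
  alpha * norm1 v + (1 - alpha) * (norm2 v) ^+ 2.

From mathcomp Require Import all_boot all_order all_algebra.
From mathcomp Require Import boolp reals.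
From mathcomp Require Import ring lra.
Set Implicit Arguments. Unset Strict Implicit. Unset Printing Implicit Defensive.
Import Order.TTheory GRing.Theory Num.Theory.
Local Open Scope ring_scope.

(* Write v := I_12 g and s := sqrt eps.  The step is -c v with c >= 0, so
   h_alpha of it depends on v only through r := |v|_1 / |v|_2, and
   Cauchy-Schwarz over the p_1 coordinates where v can be nonzero gives
   1 <= r <= sqrt p_1.  The two bounds on h_alpha are then polynomial
   inequalities in alpha, s, 1/r and sqrt p_1; the outer bounds follow from
   alpha (1 - alpha) (2 - alpha) < 0.39 and alpha (1 - alpha) <= 1/4. *)

Lemma cauchy_schwarz_sum (R : realFieldType) (n : nat) (x y : 'I_n -> R) :
  (\sum_i x i * y i) ^+ 2 <= (\sum_i x i ^+ 2) * (\sum_i y i ^+ 2).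
Proof.
set Sx := \sum_i x i ^+ 2; set Sy := \sum_i y i ^+ 2; set Sxy := \sum_i x i * y i.
have lagrange : \sum_i \sum_j (x i * y j - x j * y i) ^+ 2 = 2 * (Sx * Sy - Sxy ^+ 2).
  have inner i : \sum_j (x i * y j - x j * y i) ^+ 2
      = x i ^+ 2 * Sy + y i ^+ 2 * Sx - x i * y i * (2 * Sxy).
    rewrite /Sx /Sy /Sxy !mulr_sumr -big_split -sumrB /=.
    by apply: eq_bigr => j _; ring.
  rewrite (eq_bigr _ (fun i _ => inner i)) sumrB big_split /=.
  by rewrite -!mulr_suml -/Sx -/Sy -/Sxy; ring.
have : 0 <= \sum_i \sum_j (x i * y j - x j * y i) ^+ 2.
  by do 2![apply: sumr_ge0 => ? _]; exact: sqr_ge0.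
by rewrite lagrange pmulr_rge0 // subr_ge0.
Qed.

Section Norms.
Variables (R : realType) (p : nat).
Implicit Types (v : 'I_p -> R) (c : R).

Lemma norm2_sqr v : norm2 v ^+ 2 = \sum_d v d ^+ 2.
Proof. by rewrite sqr_sqrtr // sumr_ge0 // => d _; exact: sqr_ge0. Qed.

Lemma norm1_scale c v : norm1 (fun d => c * v d) = `|c| * norm1 v.
Proof. by rewrite /norm1 mulr_sumr; apply: eq_bigr => d _; rewrite normrM. Qed.

Lemma norm2_scale c v : norm2 (fun d => c * v d) = `|c| * norm2 v.
Proof.
rewrite /norm2 -sqrtr_sqr -sqrtrM ?sqr_ge0 // mulr_sumr.
by congr Num.sqrt; apply: eq_bigr => d _; rewrite exprMn.
Qed.

Lemma norm2_gt0 v d : v d != 0 -> 0 < norm2 v.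
Proof.
move=> vd0; rewrite sqrtr_gt0 (bigD1 d) //=.
by rewrite ltr_pwDl ?sumr_ge0 // ?exprn_even_gt0 // => i _; exact: sqr_ge0.
Qed.

Lemma norm2_le_norm1 v : norm2 v <= norm1 v.
Proof.
have n1_ge0 : 0 <= norm1 v by rewrite sumr_ge0.
rewrite -(ger0_norm n1_ge0) -sqrtr_sqr /norm2 ler_sqrt ?sqr_ge0 // expr2 mulr_sumr.
apply: ler_sum => d _.
rewrite -real_normK ?num_real // expr2 ler_wpM2r //.
by rewrite /norm1 (bigD1 d) //= lerDl sumr_ge0.
Qed.

Lemma norm1_sqr_le_card (S : pred 'I_p) v :
  (forall d, d \notin S -> v d = 0) -> norm1 v ^+ 2 <= #|S|%:R * norm2 v ^+ 2.
Proof.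
move=> vS; set ind := fun d => if d \in S then 1 else 0 : R.
have -> : norm1 v = \sum_d ind d * `|v d|.
  by apply: eq_bigr => d _; rewrite /ind; case: ifPn => [|/vS ->];
    rewrite ?mul1r ?normr0 ?mulr0.
have -> : #|S|%:R = \sum_d ind d ^+ 2 :> R.
  rewrite (eq_bigr ind) => [|d _]; last by rewrite /ind; case: ifP; rewrite ?expr1n ?expr0n.
  by rewrite -big_mkcond sumr_const.
have -> : norm2 v ^+ 2 = \sum_d `|v d| ^+ 2.
  by rewrite norm2_sqr; apply: eq_bigr => d _; rewrite real_normK ?num_real.
exact: cauchy_schwarz_sum.
Qed.

Lemma norm_ratio_bounds (S : pred 'I_p) v :
  0 < norm2 v -> (forall d, d \notin S -> v d = 0) ->
  1 <= norm1 v / norm2 v <= Num.sqrt #|S|%:R.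
Proof.
move=> n2_gt0 vS; have n1_ge0 := le_trans (ltW n2_gt0) (norm2_le_norm1 v).
rewrite ler_pdivlMr // mul1r norm2_le_norm1 /= ler_pdivrMr //.
rewrite -(ger0_norm n1_ge0) -sqrtr_sqr -(ger0_norm (ltW n2_gt0)) -sqrtr_sqr.
by rewrite -sqrtrM // ler_sqrt ?norm1_sqr_le_card // mulr_ge0 ?sqr_ge0.
Qed.

End Norms.

Definition h_of_ratio (R : realFieldType) (a s r : R) : R :=
  a * (a * s ^+ 2 + (1 - a) * s * r) + (1 - a) * (a * s ^+ 2 / r + (1 - a) * s) ^+ 2.

Lemma h_alpha_elastic_step (R : realType) (p : nat) (a eps : R) (v : 'I_p -> R) :
  0 <= a <= 1 -> 0 < eps -> 0 < norm2 v ->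
  h_alpha a (fun d => - v d * (a * eps / norm1 v + (1 - a) * Num.sqrt eps / norm2 v))
  = h_of_ratio a (Num.sqrt eps) (norm1 v / norm2 v).
Proof.
move=> /andP[a0 a1] eps_gt0 n2_gt0.
have n1_gt0 := lt_le_trans n2_gt0 (norm2_le_norm1 v).
set c := _ + _.
have c_ge0 : 0 <= c.
  by rewrite addr_ge0 // divr_ge0 ?mulr_ge0 ?sqrtr_ge0 ?subr_ge0 // ltW.
have -> : (fun d => - v d * c) = (fun d => - c * v d).
  by apply: funext => d; rewrite mulNr mulrC mulNr.
rewrite /h_alpha norm1_scale norm2_scale normrN ger0_norm // /h_of_ratio /c.
have := sqr_sqrtr (ltW eps_gt0); set s := Num.sqrt eps => <-.
by field; rewrite !gt_eqF.
Qed.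

Lemma cubic_lt (R : realFieldType) (a : R) :
  0 <= a <= 1 -> a * (1 - a) * (2 - a) < 39 / 100.
Proof.
move=> /andP[a0 a1].
(* The cubic peaks at c = 1 - 1/sqrt 3 ~ 0.4226, and (a - c)^2 (3 - 2c - a)
   falls short of 39/100 - a (1 - a) (2 - a) by an affine term that is
   positive on [0, 1]. *)
have : 0 <= (a - 4226 / 10000) ^+ 2 * (21548 / 10000 - a).
  by rewrite mulr_ge0 ?sqr_ge0 //; lra.
nra.
Qed.

Lemma elastic_lower_bound_gt (R : realFieldType) (a eps P : R) :
  0 <= a <= 1 -> 0 < eps <= 1 -> 1 <= P ->
  61 / 100 * eps < eps * (1 - a * (1 - a) * (2 - a) * (1 - eps / P)).
Proof.
move=> a01 /andP[eps0 eps1] P1.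
have f_lt := cubic_lt a01; move: a01 => /andP[a0 a1].
have f_ge0 : 0 <= a * (1 - a) * (2 - a) by rewrite !mulr_ge0 //; lra.
have ratio_ge0 : 0 <= eps / P by rewrite divr_ge0 //; lra.
have : a * (1 - a) * (2 - a) * (1 - eps / P) < 39 / 100.
  by apply: le_lt_trans f_lt; rewrite ler_piMr // lerBlDr lerDl.
nra.
Qed.

Lemma elastic_upper_bound_le (R : realFieldType) (a eps x : R) :
  0 <= a <= 1 -> 0 < eps -> 0 <= x ->
  eps * (1 + a * (1 - a) * x) <= eps * (1 + x / 4).
Proof.
move=> /andP[a0 a1] eps0 x0.
have : a * (1 - a) <= 1 / 4 by have := sqr_ge0 (a - 1 / 2); rewrite expr2; nra.
rewrite -subr_ge0 => quarter; rewrite -subr_ge0.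
have -> : eps * (1 + x / 4) - eps * (1 + a * (1 - a) * x)
    = eps * (x * (1 / 4 - a * (1 - a))) by ring.
by rewrite !mulr_ge0 // ltW.
Qed.

Lemma h_of_ratio_ge (R : realFieldType) (a s r q : R) :
  0 <= a <= 1 -> 0 < s <= 1 -> 1 <= r <= q ->
  s ^+ 2 * (1 - a * (1 - a) * (2 - a) * (1 - s ^+ 2 / q ^+ 2)) <= h_of_ratio a s r.
Proof.
move=> /andP[a0 a1] /andP[s0 s1] /andP[r1 rq].
have r0 : 0 < r := lt_le_trans ltr01 r1; have q0 := lt_le_trans r0 rq.
have inv_le : q^-1 <= r^-1 by rewrite lef_pV2 ?posrE.
have inv_q1 : q^-1 <= 1 by rewrite invf_le1 //; lra.
have inv_q0 : 0 < q^-1 by rewrite invr_gt0.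
rewrite -subr_ge0.
have -> : h_of_ratio a s r - s ^+ 2 * (1 - a * (1 - a) * (2 - a) * (1 - s ^+ 2 / q ^+ 2))
    = a * (1 - a) * (s * (r - s) + a * s ^+ 4 * (r ^- 2 - q ^- 2)
                     + 2 * (1 - a) * s ^+ 3 * (r^-1 - s / q ^+ 2)).
  by rewrite /h_of_ratio; field; rewrite !gt_eqF.
have gap2 : 0 <= r ^- 2 - q ^- 2.
  by rewrite subr_ge0 lef_pV2 ?posrE ?exprn_gt0 // ler_sqr // nnegrE ltW.
have gap1 : 0 <= r^-1 - s / q ^+ 2.
  have q_inv_sqr : q ^- 2 = q^-1 ^+ 2 by rewrite exprVn.
  have := sqr_ge0 q^-1; rewrite q_inv_sqr; nra.
rewrite mulr_ge0 ?mulr_ge0 ?subr_ge0 //.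
by rewrite !addr_ge0 // !mulr_ge0 ?exprn_ge0 ?subr_ge0 //; lra.
Qed.

Lemma h_of_ratio_le (R : realFieldType) (a s r q : R) :
  0 <= a <= 1 -> 0 < s <= 1 -> 1 <= r <= q ->
  h_of_ratio a s r <= s ^+ 2 * (1 + a * (1 - a) * (q / s - 1)).
Proof.
move=> /andP[a0 a1] /andP[s0 s1] /andP[r1 rq].
have r0 : 0 < r := lt_le_trans ltr01 r1.
have sr1 : s / r <= 1 by rewrite ler_pdivrMr // mul1r; lra.
have sr0 : 0 <= s / r by rewrite divr_ge0 // ltW.
rewrite -subr_ge0.
have -> : s ^+ 2 * (1 + a * (1 - a) * (q / s - 1)) - h_of_ratio a s r
    = a * (1 - a) * s * (q - r) + (1 - a) * a ^+ 2 * s ^+ 2 * (1 - (s / r) ^+ 2)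
      + 2 * a * (1 - a) ^+ 2 * s ^+ 2 * (1 - s / r).
  by rewrite /h_of_ratio; field; rewrite !gt_eqF.
have sr2 : (s / r) ^+ 2 <= 1 by rewrite expr2; nra.
by rewrite !addr_ge0 // !mulr_ge0 ?exprn_ge0 ?subr_ge0 //; lra.
Qed.

Section Mask.
Variables (R : realType) (p : nat) (alpha : R) (g : 'I_p -> R) (m : 'I_p).

Lemma I12g_eq0 d : ~~ (alpha * `|g m| <= `|g d|) -> I12g alpha g m d = 0.
Proof. by rewrite /I12g /I12 => /negbTE ->; rewrite mul0r. Qed.

Lemma I12g_argmax : 0 <= alpha <= 1 -> I12g alpha g m m = g m.
Proof. by move=> /andP[_ a1]; rewrite /I12g /I12 ler_piMl // mul1r. Qed.

Lemma p1E : p1 alpha g m = #|[pred d | alpha * `|g m| <= `|g d|]|%:R.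
Proof. by rewrite /p1 /I12 -big_mkcond sumr_const. Qed.

End Mask.

Theorem theorem5 (R : realType) (p : nat) (alpha eps : R) (g : 'I_p -> R)
  (m : 'I_p) :
  (1 <= p)%N ->
  0 <= alpha <= 1 ->
  0 < eps <= 1 ->
  (exists d, g d != 0) ->
  (forall d, `|g d| <= `|g m|) ->
  let P1 := p1 alpha g m in
  let h := h_alpha alpha (dx12 alpha eps g m) in
  [/\ 61 / 100 * eps < eps * (1 - alpha * (1 - alpha) * (2 - alpha) * (1 - eps / P1)),
      eps * (1 - alpha * (1 - alpha) * (2 - alpha) * (1 - eps / P1)) <= h,
      h <= eps * (1 + alpha * (1 - alpha) * (Num.sqrt (P1 / eps) - 1))
    & eps * (1 + alpha * (1 - alpha) * (Num.sqrt (P1 / eps) - 1))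
        <= eps * (1 + (Num.sqrt (P1 / eps) - 1) / 4)].
Proof.
move=> _ alpha01 /andP[eps0 eps1] [d gd0] gmax P1 h.
set v := I12g alpha g m.
have vm0 : v m != 0.
  by rewrite /v I12g_argmax // -normr_gt0 (lt_le_trans _ (gmax d)) // normr_gt0.
have n2_gt0 := norm2_gt0 vm0.
have /andP[r1 rP1] := norm_ratio_bounds n2_gt0 (@I12g_eq0 _ _ _ _ _).
rewrite -p1E -/P1 in rP1.
have P1_ge0 : 0 <= P1 by rewrite /P1 p1E.
have P1_ge1 : 1 <= P1 by rewrite -(ler_sqrt 1 P1_ge0) sqrtr1 (le_trans r1).
rewrite /h h_alpha_elastic_step //.
rewrite sqrtrM // sqrtrV; last exact: ltW.
have s0 : 0 < Num.sqrt eps by rewrite sqrtr_gt0.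
have s1 : Num.sqrt eps <= 1 by rewrite -sqrtr1 ler_sqrt.
move: (Num.sqrt eps) s0 s1 (sqr_sqrtr (ltW eps0)) => s s0 s1 <-.
move: (Num.sqrt P1) rP1 (sqr_sqrtr P1_ge0) => q rq <-.
have s01 : 0 < s <= 1 by rewrite s0 s1.
have r1q : 1 <= norm1 v / norm2 v <= q by rewrite r1 rq.
have q1 : 1 <= q := le_trans r1 rq.
split.
- apply: elastic_lower_bound_gt => //; first by rewrite exprn_gt0 //= expr_le1 // ltW.
  by rewrite exprn_ege1.
- exact: h_of_ratio_ge.
- exact: h_of_ratio_le.
- apply: elastic_upper_bound_le; rewrite ?exprn_gt0 //.
  by rewrite subr_ge0 ler_pdivlMr // mul1r (le_trans s1).
Qed.
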